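(* Let $(X,\overline{x},\delta)$ be a pointed automaton over $\Sigma$. For $x\in X$ let $\nu\mathrm{C}(x,\delta)$ denote $\nu\mathrm{C}(X,x,\delta)$ and let $\mathsf{free}(X,\delta)$ be as in the context. (1) If every state of $X$ is reachable from $\overline{x}$, then $\mathsf{free}(X,\delta)\cong\nu\mathrm{C}(\overline{x},\delta)$. (2) $\mathsf{free}(X,\delta)\cong\prod_{x\in X}\nu\mathrm{C}(x,\delta)$, where the product is taken in $\mathrm{Alg}_r(G_1)$.
   Context: $\Sigma$ is a finite alphabet, $\Sigma^\ast$ the free monoid with empty word $\epsilon$. A pointed automaton is $(X,\overline{x},\delta)$ with $\overline{x}\in X$, $\delta:X\to X^\Sigma$, extended to words by $\delta(x)(\epsilon)=x$, $\delta(x)(wa)=\delta(\delta(x)(w))(a)$; it is reachable if every state is $\delta(\overline{x})(u)$ for some $u$. Morphisms preserve initial states and commute with transitions; $\mathrm{Alg}_r(G_1)$ is the category of reachable pointed automata (it is a preorder, and the product of a family in it is the reachable part, from the tuple of initial states, of the componentwise product automaton). For a state $y$, $\langle y\rangle=\{\delta(y)(u)\mid u\in\Sigma^\ast\}$. For a congruence $C$ on $\Sigma^\ast$, let $Q(C)$ be the pointed automaton $(\Sigma^\ast/C,[\epsilon]_C,\sigma)$ with $\sigma([w]_C)(a)=[wa]_C$. Define $\nu\mathrm{C}(X,\overline{x},\delta)=Q(\sim_{\overline{x}})$ where $u\sim_{\overline{x}}v$ iff $\delta(y)(u)=\delta(y)(v)$ for all $y\in\langle\overline{x}\rangle$ (the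 kernel of the transition monoid map of the reachable part). Define $\mathsf{free}(X,\delta)=Q(\ker\delta^\sharp)$ where $(u,v)\in\ker\delta^\sharp$ iff $\delta(x)(u)=\delta(x)(v)$ for all $x\in X$ ($\ker\delta^\sharp$ is the largest set of equations satisfied by $(X,\delta)$). *)

From mathcomp Require Import all_boot.
From Stdlib Require Import ClassicalEpsilon FunctionalExtensionality.
Set Implicit Arguments. Unset Strict Implicit. Unset Printing Implicit Defensive.

Record pautom (Sigma : Type) := PAut {
  pst :> Type;
  pinit : pst;
  ptr : pst -> Sigma -> pst }.
Arguments PAut {Sigma}.

Definition run (Sigma X : Type) (d : X -> Sigma -> X) (x : X) (w : seq Sigma) : X :=
  foldl d x w.

Lemma run_rcons (Sigma X : Type) (d : X -> Sigma -> X) x w a :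
  run d x (rcons w a) = d (run d x w) a.
Proof. by rewrite /run -cats1 foldl_cat. Qed.

Definition reach_from (Sigma X : Type) (d : X -> Sigma -> X) (y z : X) : Prop :=
  exists u, z = run d y u.

Definition reachable (Sigma : Type) (A : pautom Sigma) : Prop :=
  forall y : A, reach_from (@ptr _ A) (pinit A) y.

Definition pmorph (Sigma : Type) (A B : pautom Sigma) (f : A -> B) : Prop :=
  f (pinit A) = pinit B /\ forall (x : A) (a : Sigma), f (ptr x a) = ptr (f x) a.

Definition piso (Sigma : Type) (A B : pautom Sigma) : Prop :=
  exists (f : A -> B) (g : B -> A),
    [/\ pmorph f, pmorph g, cancel f g & cancel g f].

(* Q(C): quotient automaton Sigma^*/C, states are the C-classes [w]_C (as predicates),
   initial state [eps]_C, transition [w]_C --a--> [wa]_C (computed on a chosen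
   representative; well defined when C is a congruence). *)
Definition Qst (Sigma : Type) (C : seq Sigma -> seq Sigma -> Prop) : Type :=
  {A : seq Sigma -> Prop | exists w, A = C w}.

Definition Qcls (Sigma : Type) (C : seq Sigma -> seq Sigma -> Prop) (w : seq Sigma)
  : Qst C := exist _ (C w) (ex_intro _ w erefl).

Definition Qrep (Sigma : Type) (C : seq Sigma -> seq Sigma -> Prop) (A : Qst C)
  : seq Sigma := proj1_sig (constructive_indefinite_description _ (proj2_sig A)).

Definition Q (Sigma : Type) (C : seq Sigma -> seq Sigma -> Prop) : pautom Sigma :=
  PAut (Qst C) (Qcls C [::]) (fun A a => Qcls C (rcons (Qrep A) a)).

Definition simx (Sigma X : Type) (d : X -> Sigma -> X) (x : X) (u v : seq Sigma) : Prop :=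
  forall y, reach_from d x y -> run d y u = run d y v.

Definition kerd (Sigma X : Type) (d : X -> Sigma -> X) (u v : seq Sigma) : Prop :=
  forall x, run d x u = run d x v.

Definition nuC (Sigma X : Type) (x : X) (d : X -> Sigma -> X) : pautom Sigma :=
  Q (simx d x).

Definition free (Sigma X : Type) (d : X -> Sigma -> X) : pautom Sigma :=
  Q (kerd d).

(* Product in Alg_r(G_1): reachable part, from the tuple of initial states,
   of the componentwise product automaton. *)
Definition prodst (Sigma I : Type) (Y : I -> pautom Sigma) : Type :=
  {f : forall i, Y i | exists u, f = fun i => run (@ptr _ (Y i)) (pinit (Y i)) u}.

Lemma prodst_step (Sigma I : Type) (Y : I -> pautom Sigma) (f : prodst Y) (a : Sigma) :
  exists u, (fun i => ptr (proj1_sig f i) a)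
            = fun i => run (@ptr _ (Y i)) (pinit (Y i)) u.
Proof.
case: f => f [u Hf] /=; exists (rcons u a); subst f.
by apply: functional_extensionality_dep => i; rewrite run_rcons.
Qed.

Definition prod_r (Sigma I : Type) (Y : I -> pautom Sigma) : pautom Sigma :=
  PAut (prodst Y)
    (exist _ (fun i => pinit (Y i)) (ex_intro _ [::] erefl))
    (fun f a => exist _ (fun i => ptr (proj1_sig f i) a) (prodst_step f a)).

From mathcomp Require Import all_boot.
From Stdlib Require Import ClassicalEpsilon FunctionalExtensionality PropExtensionality ProofIrrelevance.
Set Implicit Arguments. Unset Strict Implicit. Unset Printing Implicit Defensive.

(* A reachable pointed automaton is determined up to isomorphism by the kernel of
   its run map u |-> delta(xbar)(u).  The automata free(X, delta) and nuC(x, delta)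
   are quotients Q(C) of Sigma^*, hence reachable with run kernel C, and the run
   kernel of the product is the intersection of the run kernels of the factors.  So
   both claims reduce to identities between congruences: ker delta^# = ~_xbar when
   X = <xbar>, and ker delta^# is the intersection of the ~_x over all x in X. *)

Section ReachableAutomata.
Variable Sigma : Type.

Definition prun (A : pautom Sigma) (u : seq Sigma) : A := run (@ptr _ A) (pinit A) u.

Lemma prun_nil (A : pautom Sigma) : prun A [::] = pinit A.
Proof. by []. Qed.

Lemma prun_rcons (A : pautom Sigma) u a : prun A (rcons u a) = ptr (prun A u) a.
Proof. exact: run_rcons. Qed.

Lemma reachable_morph (A B : pautom Sigma) :
  reachable A -> (forall u v, prun A u = prun A v -> prun B u = prun B v) ->
  exists f : A -> B, pmorph f /\ forall u, f (prun A u) = prun B u.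
Proof.
move=> reachA kerAB.
pose rep (x : A) := proj1_sig (constructive_indefinite_description _ (reachA x)).
have repP (x : A) : x = prun A (rep x).
  by rewrite /rep; case: constructive_indefinite_description.
have fE u : prun B (rep (prun A u)) = prun B u by apply/kerAB; rewrite -repP.
exists (fun x => prun B (rep x)); split=> //; split.
- by rewrite -[pinit A]prun_nil fE.
- by move=> x a; rewrite {1}(repP x) -prun_rcons !fE prun_rcons.
Qed.

Lemma piso_reachable (A B : pautom Sigma) :
  reachable A -> reachable B ->
  (forall u v, prun A u = prun A v <-> prun B u = prun B v) -> piso A B.
Proof.
move=> reachA reachB kerAB.
have [f [morph_f fE]] := reachable_morph reachA (fun u v => proj1 (kerAB u v)).
have [g [morph_g gE]] := reachable_morph reachB (fun u v => proj2 (kerAB u v)).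
exists f, g; split=> // [x | y].
- by have [u ->] := reachA x; rewrite fE gE.
- by have [u ->] := reachB y; rewrite gE fE.
Qed.

Definition rcongruence (C : seq Sigma -> seq Sigma -> Prop) :=
  [/\ forall u, C u u, forall u v, C u v -> C v u,
      forall u v w, C u v -> C v w -> C u w &
      forall u v a, C u v -> C (rcons u a) (rcons v a)].

Section Quotient.
Variables (C : seq Sigma -> seq Sigma -> Prop) (congC : rcongruence C).

Lemma Qcls_eq u v : Qcls C u = Qcls C v <-> C u v.
Proof.
have [refl sym trans _] := congC; split.
  by move=> /(f_equal (@proj1_sig _ _)) /= ->; apply: refl.
move=> Cuv; apply: subset_eq_compat; apply: functional_extensionality => w.
by apply: propositional_extensionality; split; [apply: trans; apply: sym|apply: trans].
Qed.

Lemma Qcls_rep (A : Q C) : Qcls C (Qrep A) = A.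
Proof.
case: A => P HP; rewrite /Qrep /=.
by case: constructive_indefinite_description => w /= defP; apply: subset_eq_compat.
Qed.

Lemma prun_Q u : prun (Q C) u = Qcls C u.
Proof.
elim/last_ind: u => [|u a IH] //; rewrite prun_rcons IH /=; apply/Qcls_eq.
have [_ _ _ rcompat] := congC; apply: rcompat; apply/Qcls_eq; exact: Qcls_rep.
Qed.

Lemma reachable_Q : reachable (Q C).
Proof.
case=> P [w defP]; exists w; apply: etrans (esym (prun_Q w)).
by subst P; apply: subset_eq_compat.
Qed.

Lemma prun_Q_eq u v : prun (Q C) u = prun (Q C) v <-> C u v.
Proof. by rewrite !prun_Q; apply: Qcls_eq. Qed.

End Quotient.

Section Product.
Variables (I : Type) (Y : I -> pautom Sigma).

Lemma prun_prod_r u : proj1_sig (prun (prod_r Y) u) = fun i => prun (Y i) u.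
Proof.
elim/last_ind: u => [|u a IH] //; rewrite !prun_rcons /= IH.
by apply: functional_extensionality_dep => i; rewrite prun_rcons.
Qed.

Lemma prun_prod_r_eq u v :
  prun (prod_r Y) u = prun (prod_r Y) v <-> forall i, prun (Y i) u = prun (Y i) v.
Proof.
split=> [/(f_equal (@proj1_sig _ _)) | eq_uv].
  by rewrite !prun_prod_r => eq_uv i; rewrite (equal_f_dep eq_uv i).
apply: eq_sig_hprop => [? ? ?|]; first exact: proof_irrelevance.
by rewrite !prun_prod_r; apply: functional_extensionality_dep.
Qed.

Lemma reachable_prod_r : reachable (prod_r Y).
Proof.
case=> p [u defp]; exists u.
by apply: eq_sig_hprop => [? ? ?|]; [exact: proof_irrelevance | rewrite prun_prod_r].
Qed.

End Product.
End ReachableAutomata.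

Section Congruences.
Variables (Sigma X : Type) (d : X -> Sigma -> X).

Lemma kerd_rcongruence : rcongruence (kerd d).
Proof.
split=> [u x | u v eq_uv x | u v w eq_uv eq_vw x | u v a eq_uv x].
- by [].
- by rewrite eq_uv.
- by rewrite eq_uv eq_vw.
- by rewrite !run_rcons eq_uv.
Qed.

Lemma simx_rcongruence x : rcongruence (simx d x).
Proof.
split=> [u y _ | u v eq_uv y xy | u v w eq_uv eq_vw y xy | u v a eq_uv y xy].
- by [].
- by rewrite eq_uv.
- by rewrite eq_uv ?eq_vw.
- by rewrite !run_rcons eq_uv.
Qed.

Lemma kerd_simx_reach (xbar : X) :
  (forall y, reach_from d xbar y) -> forall u v, kerd d u v <-> simx d xbar u v.
Proof. by move=> reach u v; split=> [eq_uv y _ | eq_uv y]; apply: eq_uv. Qed.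

Lemma kerd_simx_all u v : kerd d u v <-> forall x, simx d x u v.
Proof.
split=> [eq_uv x y _ | eq_uv x]; first exact: eq_uv.
by apply: eq_uv; exists [::].
Qed.

End Congruences.

Theorem mainTheorem4 (Sigma : finType) (X : Type) (xbar : X) (d : X -> Sigma -> X) :
  ((forall y : X, reach_from d xbar y) -> piso (free d) (nuC xbar d)) /\
  piso (free d) (prod_r (fun x : X => nuC x d)).
Proof.
have reach_free := reachable_Q (kerd_rcongruence d).
have prun_free := prun_Q_eq (kerd_rcongruence d).
have prun_nuC x := prun_Q_eq (simx_rcongruence d x).
split=> [reach|].
- apply: piso_reachable => // [|u v]; first exact: reachable_Q (simx_rcongruence d xbar).
  by rewrite prun_free prun_nuC; apply: kerd_simx_reach.
- apply: piso_reachable => // [|u v]; first exact: reachable_prod_r.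
  rewrite prun_free prun_prod_r_eq kerd_simx_all.
  by split=> eq_uv x; apply/prun_nuC/eq_uv.
Qed.
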